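(* Consider the deterministic one-dimensional state equation $\dot X(s)=s\,u_1(s)+u_2(s)$, $s\in[0,1]$, $X(0)=x$, with controls $u_1,u_2\in L^2(0,1;\mathbb R)$, and the functional $J(x;u_1,u_2)=-|X(1)|^2+\int_0^1 s^2|u_1(s)|^2ds$. Then: (i) $J(0;u_1,0)\ge0$ for all $u_1$ and $J(0;0,u_2)\le0$ for all $u_2$; (ii) $(u_1,u_2)=(0,-1)$ is an open-loop saddle point of the game (Player 1 minimizing, Player 2 maximizing $J$) for $x=1$; (iii) for every $\varepsilon>0$, the game with functional $J_\varepsilon(x;u_1,u_2)=J(x;u_1,u_2)-\varepsilon\int_0^1|u_2(s)|^2ds$ (same state equation) has no open-loop saddle point for $x=1$.
   Context: An open-loop saddle point for initial state $x$ of a game with functional $\mathcal J$ is a pair $(u_1^*,u_2^* )$ with $\mathcal J(x;u_1^*,u_2)\le\mathcal J(x;u_1^*,u_2^* )\le\mathcal J(x;u_1,u_2^* )$ for all admissible $(u_1,u_2)$; here the admissible controls of both players are all real square-integrable functions on $[0,1]$. *)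

From HB Require Import structures.
From mathcomp Require Import all_boot all_order all_algebra.
From mathcomp Require Import all_classical all_reals all_analysis.
Set Implicit Arguments. Unset Strict Implicit. Unset Printing Implicit Defensive.
Import Order.TTheory GRing.Theory Num.Theory.
Local Open Scope classical_set_scope.
Local Open Scope ring_scope.

Section Game.
Variable R : realType.
Notation mu := (@lebesgue_measure R).
Let I01 : set R := `[0%R, 1%R].

(* admissible controls: real square-integrable functions on [0,1]
   (represented by functions R -> R; only values on [0,1] matter) *)
Definition L2 (u : R -> R) : Prop :=
  measurable_fun I01 u /\
  (\int[mu]_(s in I01) ((u s) ^+ 2)%:E < +oo)%E.

(* terminal state X(1) of dX/ds = s u1(s) + u2(s), X(0) = x *)
Definition Xend (x : R) (u1 u2 : R -> R) : R :=
  x + Rintegral mu I01 (fun s => s * u1 s + u2 s).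

Definition J (x : R) (u1 u2 : R -> R) : R :=
  - (Xend x u1 u2) ^+ 2 + Rintegral mu I01 (fun s => s ^+ 2 * (u1 s) ^+ 2).

Definition Jeps (eps : R) (x : R) (u1 u2 : R -> R) : R :=
  J x u1 u2 - eps * Rintegral mu I01 (fun s => (u2 s) ^+ 2).

Definition saddle (JJ : R -> (R -> R) -> (R -> R) -> R) (x : R)
    (u1s u2s : R -> R) : Prop :=
  L2 u1s /\ L2 u2s /\
  forall u1 u2, L2 u1 -> L2 u2 ->
    JJ x u1s u2 <= JJ x u1s u2s /\ JJ x u1s u2s <= JJ x u1 u2s.
End Game.

(* Write A(u) = int_0^1 s u(s) ds and B(u) = int_0^1 s^2 u(s)^2 ds.  For
   square-integrable controls the terminal state is X(1) = c + A(u1) with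
   c = x + int u2, so J(x;u1,u2) = Phi c u1 := -(c + A u1)^2 + B u1.
   By Cauchy-Schwarz, A(u)^2 <= B(u); this gives (i) and (ii) at once.
   For (iii), let (p,q) be a saddle point of J_eps at x = 1 and c = 1 + int q.
   Then p minimises Phi c.  Perturbing p along a bump v supported on
   [d,2d] yields the first-order identity  int (s p)(s v) = (c + A p) A(v);
   as d -> 0 the left side is O(d^(5/2)) while A(v) >= d^2, hence
   c + A p = 0, and comparing with u1 = 0 forces c = 0 and A p = 0.
   Perturbing q by constants, maximality of q then reads
   -t^2 + 2 eps t - eps t^2 <= 0 for all t, which is false for eps > 0.
   The file first develops the needed L^2 calculus on [0,1] (closure
   properties, linearity, Cauchy-Schwarz, integrals of bumps), then the
   analysis of the reduced functional Phi, and finally the theorem. *)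
From HB Require Import structures.
From mathcomp Require Import all_boot all_order all_algebra.
From mathcomp Require Import all_classical all_reals all_analysis.
From mathcomp Require Import ring lra measurable_realfun.
Import Order.TTheory GRing.Theory Num.Theory.
Set Implicit Arguments.
Unset Strict Implicit.
Local Open Scope ring_scope.

Section Quadratics.
Variable R : realFieldType.

Lemma nonneg_quadratic_discr (a b c : R) : 0 <= c ->
  (forall t, 0 <= a + 2 * b * t + c * t ^+ 2) -> b ^+ 2 <= a * c.
Proof.
move=> c0 H; have a0 : 0 <= a by have := H 0; rewrite !mulr0 expr0n /= mulr0 !addr0.
have [c_eq0|cn0] := eqVneq c 0; last first.
  have cpos : 0 < c by rewrite lt_def cn0.
  have := H (- b / c); set t := - b / c => Ht.
  have ct : c * t = - b by rewrite /t mulrC divfK.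
  nra.
subst c; have [->|bn0] := eqVneq b 0; first by rewrite expr0n /= mulr0.
have := H (- (a + 1) / (2 * b)).
have -> : 2 * b * (- (a + 1) / (2 * b)) = - (a + 1).
  by rewrite mulrC divfK // mulf_neq0 // pnatr_eq0.
by rewrite mul0r addr0 => h; lra.
Qed.

Lemma nonneg_quadratic_slope (b c : R) :
  (forall t, 0 <= 2 * b * t + c * t ^+ 2) -> b = 0.
Proof.
move=> H; have := @nonneg_quadratic_discr 0 b `|c| (normr_ge0 c).
have cc : c <= `|c| := ler_norm c.
rewrite mul0r => /(_ _) b20; apply/eqP; rewrite -sqrf_eq0 eq_le sqr_ge0 andbT.
apply: b20 => t; rewrite add0r; apply: (le_trans (H t)).
by rewrite lerD2l; apply: ler_wpM2r => //; exact: sqr_ge0.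
Qed.

Lemma le_small_multiples (x K : R) : 0 <= K ->
  (forall d, 0 < d -> 2 * d <= 1 -> x <= K * d) -> x <= 0.
Proof.
move=> K0 H; rewrite leNgt; apply/negP => x0.
have den0 : 0 < 2 * (K + 1 + x) by lra.
set d := x / (2 * (K + 1 + x)).
have dd : d * (2 * (K + 1 + x)) = x by rewrite /d divfK // gt_eqF.
have d0 : 0 < d by rewrite divr_gt0.
have /H : 2 * d <= 1 by nra.
by move=> /(_ d0); nra.
Qed.

End Quadratics.

Section L2Calculus.
Variable R : realType.
Local Notation mu := (@lebesgue_measure R).
Local Notation I := (`[0%R, 1%R]%classic : set R).
Local Notation Int f := (mu.-integrable I (EFin \o f)).
Local Notation RI f := (Rintegral mu I f).

Lemma measurable_I : measurable I.
Proof. exact: measurable_itv. Qed.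

Lemma lebesgue_measure_I : mu I = 1%:E.
Proof. by rewrite lebesgue_measure_itv /= lte_fin ltr01 /= -EFinD subr0. Qed.

Lemma RI_ext (f g : R -> R) : f =1 g -> RI f = RI g.
Proof. by move=> fg; congr Rintegral; apply/funext. Qed.

Lemma RI_cst (c : R) : RI (fun _ => c) = c.
Proof.
rewrite Rintegral_cst ?measurable_I // (_ : fine _ = 1) ?mulr1 //.
exact: (congr1 fine lebesgue_measure_I).
Qed.

Lemma RI_le (f g : R -> R) : Int f -> Int g -> (forall s, I s -> f s <= g s) ->
  RI f <= RI g.
Proof. exact: (@le_Rintegral _ _ _ mu _ f g measurable_I). Qed.

Lemma Int_cst (c : R) : Int (fun _ => c).
Proof.
apply: (@measurable_bounded_integrable _ _ _ mu (fun _ => c) I measurable_I).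
- by change (mu I < +oo)%E; rewrite lebesgue_measure_I ltry.
- exact: measurable_cst.
- exact: bounded_cst.
Qed.

Lemma Int_scale (f : R -> R) (t : R) : Int f -> Int (fun s => t * f s).
Proof.
move=> If; have Itf := @integrableZl _ _ _ mu _ measurable_I t _ If.
apply: (@eq_integrable _ _ _ mu _ measurable_I _ _ _ Itf).
by move=> s _ /=; rewrite EFinM.
Qed.

Lemma Int_lin (f g : R -> R) (t : R) : Int f -> Int g -> Int (fun s => f s + t * g s).
Proof.
move=> If Ig; have Isum := @integrableD _ _ _ mu _ measurable_I _ _ If (Int_scale t Ig).
apply: (@eq_integrable _ _ _ mu _ measurable_I _ _ _ Isum).
by move=> s _ /=; rewrite EFinD.
Qed.

Lemma RI_scale (f : R -> R) (t : R) : Int f -> RI (fun s => t * f s) = t * RI f.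
Proof. exact: (@RintegralZl _ _ _ mu _ f t measurable_I). Qed.

Lemma RI_lin (f g : R -> R) (t : R) : Int f -> Int g ->
  RI (fun s => f s + t * g s) = RI f + t * RI g.
Proof.
by move=> If Ig; rewrite RintegralD ?measurable_I ?RI_scale //; exact: Int_scale.
Qed.

Lemma Int_dominated (f g : R -> R) : measurable_fun I f ->
  (forall s, I s -> `|f s| <= g s) -> Int g -> Int f.
Proof.
move=> mf fg Ig; apply: (@le_integrable _ _ _ mu _ measurable_I _ _ _ _ Ig).
  exact/measurable_EFinP.
move=> s Is /=; rewrite lee_fin (le_trans (fg s Is)) //; exact: ler_norm.
Qed.

Lemma L2P (f : R -> R) : L2 f <-> measurable_fun I f /\ Int (fun s => f s ^+ 2).
Proof.
have sq_norm : (\int[mu]_(s in I) `|(f s ^+ 2)%:E| = \int[mu]_(s in I) (f s ^+ 2)%:E)%E.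
  by apply: eq_integral => s _; rewrite gee0_abs // lee_fin sqr_ge0.
split=> [[mf fin]|[mf /integrableP [_ fin]]]; split => //; last by rewrite -sq_norm.
apply/integrableP; split; last by rewrite sq_norm.
by apply/measurable_EFinP; exact: measurable_funX.
Qed.

Lemma L2_measurable f : L2 f -> measurable_fun I f.
Proof. by case/L2P. Qed.

Lemma L2_Int_sq f : L2 f -> Int (fun s => f s ^+ 2).
Proof. by case/L2P. Qed.

(* The product of two L2 functions is integrable, since |fg| <= f^2 + g^2. *)
Lemma L2_Int_mul (f g : R -> R) : L2 f -> L2 g -> Int (fun s => f s * g s).
Proof.
move=> /L2P [mf If2] /L2P [mg Ig2].
apply: (@Int_dominated _ (fun s => f s ^+ 2 + 1 * g s ^+ 2)).
- exact: measurable_funM.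
- move=> s _; rewrite mul1r normrM -[f s ^+ 2]real_normK ?num_real //.
  rewrite -[g s ^+ 2]real_normK ?num_real //.
  have := normr_ge0 (f s); have := normr_ge0 (g s).
  by move: `|f s| `|g s| => a b; nra.
- exact: Int_lin.
Qed.

Lemma L2_cst (c : R) : L2 (fun _ => c).
Proof. by apply/L2P; split; [exact: measurable_cst | exact: Int_cst]. Qed.

Lemma L2_Int f : L2 f -> Int f.
Proof.
move=> Lf; have I1f := L2_Int_mul (L2_cst 1) Lf.
apply: (@eq_integrable _ _ _ mu _ measurable_I _ _ _ I1f).
by move=> s _ /=; rewrite mul1r.
Qed.

Lemma RI_sq_lin (f g : R -> R) (t : R) : L2 f -> L2 g ->
  RI (fun s => (f s + t * g s) ^+ 2) =
  RI (fun s => f s ^+ 2) + 2 * t * RI (fun s => f s * g s) + t ^+ 2 * RI (fun s => g s ^+ 2).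
Proof.
move=> Lf Lg; have If2 := L2_Int_sq Lf; have Ifg := L2_Int_mul Lf Lg; have Ig2 := L2_Int_sq Lg.
rewrite (@RI_ext _ (fun s => f s ^+ 2 + (2 * t) * (f s * g s) + t ^+ 2 * g s ^+ 2));
  last by move=> s; ring.
by rewrite !RI_lin ?mulrA //; exact: Int_lin.
Qed.

Lemma L2_lin (f g : R -> R) (t : R) : L2 f -> L2 g -> L2 (fun s => f s + t * g s).
Proof.
move=> Lf Lg; apply/L2P; split.
  apply: measurable_funD; first exact: L2_measurable.
  by apply: measurable_funM => //; exact: L2_measurable.
have If2 := L2_Int_sq Lf; have Ifg := L2_Int_mul Lf Lg; have Ig2 := L2_Int_sq Lg.
have Iexp : Int (fun s => f s ^+ 2 + (2 * t) * (f s * g s) + t ^+ 2 * g s ^+ 2).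
  by do 2 apply: Int_lin => //.
apply: (@eq_integrable _ _ _ mu _ measurable_I _ _ _ Iexp).
by move=> s _ /=; congr EFin; ring.
Qed.

Lemma L2_contract (h f : R -> R) : measurable_fun I h ->
  (forall s, I s -> `|h s| <= 1) -> L2 f -> L2 (fun s => h s * f s).
Proof.
move=> mh hb Lf; apply/L2P; split.
  by apply: measurable_funM => //; exact: L2_measurable.
apply: Int_dominated (L2_Int_sq Lf).
  by apply: measurable_funX; apply: measurable_funM => //; exact: L2_measurable.
move=> s Is; rewrite ger0_norm ?sqr_ge0 // exprMn.
have /ler_normlP [h1 h2] := hb s Is.
have hh : h s ^+ 2 <= 1 by nra.
by have := sqr_ge0 (f s); move: (f s ^+ 2) (h s ^+ 2) hh => y z; nra.
Qed.

Lemma L2_weight (u : R -> R) : L2 u -> L2 (fun s => s * u s).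
Proof.
apply: L2_contract; first exact: measurable_id.
by move=> s; rewrite /= in_itv /= => /andP [s0 s1]; rewrite ger0_norm.
Qed.

Lemma cauchy_schwarz (f g : R -> R) : L2 f -> L2 g ->
  RI (fun s => f s * g s) ^+ 2 <= RI (fun s => f s ^+ 2) * RI (fun s => g s ^+ 2).
Proof.
move=> Lf Lg; apply: nonneg_quadratic_discr.
  by apply: Rintegral_ge0 => s _; exact: sqr_ge0.
move=> t; rewrite [2 * _ * t]mulrAC [_ * t ^+ 2]mulrC -RI_sq_lin //.
by apply: Rintegral_ge0 => s _; exact: sqr_ge0.
Qed.

(* The bump 1_[d,2d], used as a test direction concentrated near s = 0. *)
Definition bump (d : R) : R -> R := \1_(`[d, 2 * d]%classic : set R).

Lemma bumpE (d s : R) : bump d s = if d <= s <= 2 * d then 1 else 0.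
Proof. by rewrite /bump indicE mem_setE in_itv /=; case: ifP. Qed.

Lemma L2_bump (d : R) : L2 (bump d).
Proof.
have -> : bump d = (fun s => bump d s * 1) by apply/funext => s; rewrite mulr1.
apply: L2_contract (L2_cst 1); first by apply: measurable_indic; exact: measurable_itv.
by move=> s _; rewrite bumpE; case: ifP; rewrite ?normr1 ?normr0.
Qed.

Lemma RI_bump (d : R) : 0 <= d -> 2 * d <= 1 -> RI (bump d) = d.
Proof.
move=> d0 d1; rewrite /Rintegral integral_indic ?measurable_I ?setIidl //=; last first.
  by move=> s; rewrite /= !in_itv /= => /andP [h1 h2]; rewrite (le_trans d0 h1) (le_trans h2 d1).
rewrite lebesgue_measure_itv /= lte_fin.
case: ltP => [_|]; first by rewrite -EFinD /=; ring.
by move=> h; have -> : d = 0 by lra; rewrite mulr0.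
Qed.

Lemma bump_weight_ge (d : R) : 0 < d -> 2 * d <= 1 ->
  d ^+ 2 <= RI (fun s => s * bump d s).
Proof.
move=> d0 d1; have Ib := L2_Int (L2_bump d).
rewrite expr2 -{2}(RI_bump (ltW d0) d1) -RI_scale //.
apply: RI_le; [exact: Int_scale | exact: L2_Int (L2_weight (L2_bump d)) |].
by move=> s _; rewrite bumpE; case: ifP => [/andP [h _]|_]; rewrite ?mulr1 ?mulr0.
Qed.

Lemma bump_weight2_sq_le (d : R) : 0 < d -> 2 * d <= 1 ->
  RI (fun s => (s * (s * bump d s)) ^+ 2) <= 16 * d ^+ 5.
Proof.
move=> d0 d1; have Ib := L2_Int (L2_bump d).
rewrite (_ : 16 * d ^+ 5 = 16 * d ^+ 4 * d); last by ring.
rewrite -{3}(RI_bump (ltW d0) d1) -RI_scale //.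
apply: RI_le; [exact: L2_Int_sq (L2_weight (L2_weight (L2_bump d))) | exact: Int_scale |].
move=> s _; rewrite bumpE; case: ifP => [/andP [h1 h2]|]; last by rewrite !mulr0 expr0n.
have ss : s * s <= 4 * d ^+ 2 by nra.
have ss0 : 0 <= s * s by nra.
rewrite !mulr1 (_ : 16 * d ^+ 4 = (4 * d ^+ 2) ^+ 2); last by ring.
by move: (s * s) (4 * d ^+ 2) ss ss0 => x y; nra.
Qed.

End L2Calculus.

Section ReducedFunctional.
Variable R : realType.
Local Notation mu := (@lebesgue_measure R).
Local Notation I := (`[0%R, 1%R]%classic : set R).
Local Notation RI f := (Rintegral mu I f).

Definition Phi (c : R) (u : R -> R) : R :=
  - (c + RI (fun s => s * u s)) ^+ 2 + RI (fun s => (s * u s) ^+ 2).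

Lemma J_Phi (x : R) (u1 u2 : R -> R) : L2 u1 -> L2 u2 ->
  J x u1 u2 = Phi (x + RI u2) u1.
Proof.
move=> L1 L2u; rewrite /J /Phi /Xend.
have -> : RI (fun s => s * u1 s + u2 s) = RI (fun s => s * u1 s + 1 * u2 s).
  by apply: RI_ext => s; rewrite mul1r.
rewrite RI_lin ?mul1r; [|exact: L2_Int (L2_weight L1) | exact: L2_Int].
congr (- (_ ^+ 2) + _); first ring.
by apply: RI_ext => s; rewrite exprMn.
Qed.

Lemma Jeps_Phi (eps x : R) (u1 u2 : R -> R) : L2 u1 -> L2 u2 ->
  Jeps eps x u1 u2 = Phi (x + RI u2) u1 - eps * RI (fun s => u2 s ^+ 2).
Proof. by move=> L1 L2u; rewrite /Jeps J_Phi. Qed.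

Lemma Jeps_shift (eps x t : R) (u1 q : R -> R) : L2 u1 -> L2 q ->
  Jeps eps x u1 (fun s => q s + t * 1) =
  Phi (x + RI q + t) u1 - eps * (RI (fun s => q s ^+ 2) + 2 * t * RI q + t ^+ 2).
Proof.
move=> L1 Lq; have Lqt := L2_lin t Lq (L2_cst 1).
rewrite Jeps_Phi // (RI_lin t (L2_Int Lq) (L2_Int (L2_cst 1))) (RI_sq_lin t Lq (L2_cst 1)).
rewrite !RI_cst (@RI_ext _ (fun s => q s * 1) q) => [|s]; last by rewrite mulr1.
by rewrite expr1n !mulr1 addrA.
Qed.

Lemma Phi_zero (c : R) : Phi c (fun _ => 0) = - c ^+ 2.
Proof.
rewrite /Phi (@RI_ext _ (fun s => s * 0) (fun _ => 0)) => [|s]; last by rewrite mulr0.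
rewrite (@RI_ext _ (fun s => (s * 0) ^+ 2) (fun _ => 0)) => [|s]; last by rewrite mulr0 expr0n.
by rewrite RI_cst !addr0.
Qed.

(* Cauchy-Schwarz against the constant 1: (int s u)^2 <= int (s u)^2. *)
Lemma Phi0_ge0 (u : R -> R) : L2 u -> 0 <= Phi 0 u.
Proof.
move=> Lu; have := cauchy_schwarz (L2_cst 1) (L2_weight Lu).
rewrite (@RI_ext _ (fun s => 1 * (s * u s)) (fun s => s * u s)) => [|s]; last by rewrite mul1r.
by rewrite expr1n RI_cst mul1r /Phi add0r addrC subr_ge0.
Qed.

Lemma Phi_first_order (c : R) (p v : R -> R) : L2 p -> L2 v ->
  (forall u, L2 u -> Phi c p <= Phi c u) ->
  RI (fun s => s * p s * (s * v s)) =
  (c + RI (fun s => s * p s)) * RI (fun s => s * v s).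
Proof.
move=> Lp Lv min_p; set A := RI (fun s => s * p s).
set a := RI (fun s => s * v s); set b := RI (fun s => s * p s * (s * v s)).
set B := RI (fun s => (s * p s) ^+ 2); set b2 := RI (fun s => (s * v s) ^+ 2).
have perturbed t : Phi c (fun s => p s + t * v s) =
    - (c + A + t * a) ^+ 2 + (B + 2 * t * b + t ^+ 2 * b2).
  rewrite /Phi (@RI_ext _ (fun s => s * (p s + t * v s)) (fun s => s * p s + t * (s * v s)));
    last by move=> s; ring.
  rewrite (@RI_ext _ (fun s => (s * (p s + t * v s)) ^+ 2)
      (fun s => (s * p s + t * (s * v s)) ^+ 2)); last by move=> s; ring.
  have Lsp := L2_weight Lp; have Lsv := L2_weight Lv.
  by rewrite RI_lin ?RI_sq_lin ?addrA //; exact: L2_Int.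
apply/eqP; rewrite -subr_eq0; apply/eqP.
apply: (@nonneg_quadratic_slope _ _ (b2 - a ^+ 2)) => t.
have := min_p _ (L2_lin t Lp Lv); rewrite perturbed /Phi -/A -/B -subr_ge0.
by congr (0 <= _); ring.
Qed.

(* Testing the Euler-Lagrange condition with bumps near 0 shows that a
   minimiser of Phi c drives the terminal state c + int s p to 0. *)
Lemma Phi_minimiser_terminal (c : R) (p : R -> R) : L2 p ->
  (forall u, L2 u -> Phi c p <= Phi c u) -> c + RI (fun s => s * p s) = 0.
Proof.
move=> Lp min_p; set D := c + _; set C := RI (fun s => p s ^+ 2).
have C0 : 0 <= C by apply: Rintegral_ge0 => s _; exact: sqr_ge0.
suff : D ^+ 2 <= 0 by move=> D2; apply/eqP; rewrite -sqrf_eq0 eq_le D2 sqr_ge0.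
apply: (@le_small_multiples _ _ (16 * C)) => [|d d0 d1]; first lra.
have Lv := L2_weight (L2_weight (L2_bump d)).
have euler := Phi_first_order Lp (L2_bump d) min_p; rewrite -/D in euler.
have mass := bump_weight_ge d0 d1; have energy := bump_weight2_sq_le d0 d1.
have cs := cauchy_schwarz Lp Lv.
rewrite (@RI_ext _ (fun s => p s * (s * (s * bump d s))) (fun s => s * p s * (s * bump d s))) in cs;
  last by move=> s; ring.
rewrite euler -/C in cs; move: mass energy cs.
set a := RI (fun s => s * bump d s); set e := RI (fun s => (s * (s * bump d s)) ^+ 2).
move=> mass energy cs.
have d2 : 0 <= d ^+ 2 := sqr_ge0 d.
have d4 : d ^+ 4 <= a ^+ 2.
  by rewrite (_ : d ^+ 4 = (d ^+ 2) ^+ 2); [move: (d ^+ 2) d2 mass => x; nra | ring].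
have : D ^+ 2 * d ^+ 4 <= 16 * C * d * d ^+ 4.
  apply: le_trans (ler_wpM2l (sqr_ge0 D) d4) _; rewrite -exprMn.
  apply: le_trans cs (le_trans (ler_wpM2l C0 energy) _).
  by rewrite le_eqVlt; apply/orP; left; apply/eqP; ring.
by rewrite ler_pM2r // exprn_gt0.
Qed.

(* Phi c has a minimiser on L2 only when c = 0; the minimiser then has
   int s p = 0.  Indeed Phi c p = int (s p)^2 >= 0 must not exceed
   Phi c 0 = - c^2. *)
Lemma Phi_minimiser (c : R) (p : R -> R) : L2 p ->
  (forall u, L2 u -> Phi c p <= Phi c u) -> c = 0 /\ RI (fun s => s * p s) = 0.
Proof.
move=> Lp min_p; have terminal := Phi_minimiser_terminal Lp min_p.
have := min_p _ (L2_cst 0); rewrite Phi_zero /Phi terminal expr0n /= oppr0 add0r.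
have : 0 <= RI (fun s => (s * p s) ^+ 2) by apply: Rintegral_ge0 => s _; exact: sqr_ge0.
move=> B0 Bc; have c0 : c = 0.
  by apply/eqP; rewrite -sqrf_eq0 eq_le sqr_ge0 andbT -oppr_ge0 (le_trans B0 Bc).
by split=> //; move: terminal; rewrite c0 add0r.
Qed.

End ReducedFunctional.

Local Notation RI f := (Rintegral (@lebesgue_measure _) (`[0%R, 1%R]%classic : set _) f).

Theorem mainTheorem10 (R : realType) :
  ((forall u1 : R -> R, L2 u1 -> 0 <= J 0 u1 (fun _ => 0)) /\
   (forall u2 : R -> R, L2 u2 -> J 0 (fun _ => 0) u2 <= 0)) /\
  saddle (@J R) 1 (fun _ => 0) (fun _ => -1) /\
  (forall eps : R, 0 < eps ->
     ~ exists u1 u2 : R -> R, saddle (Jeps eps) 1 u1 u2).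
Proof.
have L0 := @L2_cst R 0; have L1 := @L2_cst R 1; have Lm1 := @L2_cst R (-1).
split; [split|split].
- by move=> u1 Lu1; rewrite J_Phi // RI_cst addr0; exact: Phi0_ge0.
- by move=> u2 Lu2; rewrite J_Phi // Phi_zero add0r oppr_le0 sqr_ge0.
- do 2 (split; first by []); move=> u1 u2 Lu1 Lu2.
  rewrite !J_Phi // RI_cst subrr !Phi_zero expr0n /= oppr0 oppr_le0 sqr_ge0.
  by split=> //; exact: Phi0_ge0.
move=> eps eps0 [p [q [Lp [Lq saddle_pq]]]].
set m := RI q; set Q := RI (fun s => q s ^+ 2).
(* Player 1's best response p minimises Phi (1 + int q). *)
have [c0 A0] : 1 + m = 0 /\ RI (fun s => s * p s) = 0.
  apply: (@Phi_minimiser R (1 + m) p Lp) => u Lu.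
  by have := (saddle_pq u q Lu Lq).2; rewrite !Jeps_Phi // lerD2r.
(* Player 2's control q must beat every constant shift q + t. *)
suff /nonneg_quadratic_slope : forall t, 0 <= 2 * (- eps) * t + (1 + eps) * t ^+ 2.
  by move/eqP; rewrite oppr_eq0 gt_eqF.
move=> t; have := (saddle_pq p _ Lp (L2_lin t Lq L1)).1.
rewrite Jeps_shift // Jeps_Phi // /Phi A0 -/m -/Q -subr_ge0 (_ : m = -1); last by lra.
by congr (0 <= _); ring.
Qed.
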